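(* Let $\overline r=(r_1,r_2)$ and $n>0$. Then $\mathcal Z_{\overline r,n}$ (a rational function of $t_1,t_2$ alone) vanishes upon substituting $t_1=t_2^{-1}$: $\mathcal Z_{\overline r,n}|_{t_1=t_2^{-1}}=0$.
   Context: $\mathcal M_{\overline r,n}=\operatorname{Quot}_{\mathcal C}(\iota_{1*}\mathcal O_{\mathbb A^1_1}^{r_1}\oplus\iota_{2*}\mathcal O_{\mathbb A^1_2}^{r_2},n)$, $\mathcal C=Z(x_1x_2)\subset\mathbb A^2$, $\mathbb A^1_i=Z(x_i)$, with torus $\mathbf T$ (coordinates $t_1,t_2$ acting on $\mathbb A^2$ by $(t_1x_1,t_2x_2)$, and framing coordinates $w_{i\alpha}$) and $\mathbf T$-equivariant virtual structure sheaf $\mathcal O^{\mathrm{vir}}$ from the zero-locus description $\{[B_1,B_2]=0,B_1I_1=B_2I_2=0\}$ inside the non-commutative Quot scheme; $\mathcal Z_{\overline r,n}=\chi(\mathcal M_{\overline r,n},\mathcal O^{\mathrm{vir}})$, defined via equivariant localization, which is independent of the $w_{i\alpha}$. *)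

From HB Require Import structures.
From mathcomp Require Import all_boot all_order all_algebra.
From mathcomp Require Import fraction.
From mathcomp Require Import mpoly.
Set Implicit Arguments. Unset Strict Implicit. Unset Printing Implicit Defensive.
Import Order.TTheory GRing.Theory Num.Theory.
Local Open Scope ring_scope.

Notation "x %:F" := (@FracField.tofrac _ x).

(* Equivariant parameters: variables indexed by 'I_(2 + (r1 + r2)):
   index 0 = t1, index 1 = t2, index 2 + a = framing weight w_a,
   where a : 'I_(r1+r2), a < r1 corresponds to w_{1,a} (summand iota_{1*}O),
   a >= r1 corresponds to w_{2,a-r1} (summand iota_{2*}O). *)
Definition nv (r1 r2 : nat) : nat := (2 + (r1 + r2))%N.
Definition tvar (r1 r2 : nat) (i : 'I_2) : 'I_(nv r1 r2) := lshift (r1 + r2) i.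
Definition wvar (r1 r2 : nat) (a : 'I_(r1 + r2)) : 'I_(nv r1 r2) := rshift 2 a.
Definition t1i : 'I_2 := @Ordinal 2 0 isT.
Definition t2i : 'I_2 := @Ordinal 2 1 isT.

(* Laurent monomials = integer exponent vectors; virtual T-characters =
   finite lists of (integer coefficient, Laurent monomial). *)
Definition expo (N : nat) := {ffun 'I_N -> int}.
Definition vchar (N : nat) := seq (int * expo N).

Definition eone (N : nat) : expo N := [ffun _ => 0].
Definition evar (N : nat) (i : 'I_N) : expo N := [ffun j => ((j == i) : nat)%:Z].
Definition emul (N : nat) (a b : expo N) : expo N := [ffun j => a j + b j].
Definition einv (N : nat) (a : expo N) : expo N := [ffun j => - a j].
Definition epow (N : nat) (a : expo N) (z : int) : expo N := [ffun j => a j * z].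

Definition vmul (N : nat) (A B : vchar N) : vchar N :=
  [seq (p.1 * q.1, emul p.2 q.2) | p <- A, q <- B].
Definition vdual (N : nat) (A : vchar N) : vchar N :=
  [seq (p.1, einv p.2) | p <- A].
Definition vmult (N : nat) (A : vchar N) (e : expo N) : int :=
  \sum_(p <- A | p.2 == e) p.1.

Section Quot.
Variables r1 r2 : nat.
Local Notation N := (nv r1 r2).
Local Notation T1 := (evar (tvar r1 r2 t1i)).
Local Notation T2 := (evar (tvar r1 r2 t2i)).

(* character of V = H^0(Q) at the T-fixed point indexed by k :
   the quotient  (+)_a  O_{A^1} e_a / x^{k a} ; for a < r1 the generator
   lives on A^1_1 = Z(x1) (coordinate x2), otherwise on A^1_2 = Z(x2)
   (coordinate x1). *)
Definition Vchar (k : 'I_(r1 + r2) -> nat) : vchar N :=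
  flatten [seq [seq (1%:Z,
      emul (evar (wvar a))
           (epow (if (a < r1)%N then T2 else T1) (- (j%:Z))))
    | j <- iota 0 (k a)] | a <- enum 'I_(r1 + r2)].

Definition W1char : vchar N :=
  map (fun a : 'I_(r1 + r2) => (1%:Z, evar (wvar a)))
    (filter (fun a : 'I_(r1 + r2) => (a < r1)%N) (enum 'I_(r1 + r2))).
Definition W2char : vchar N :=
  map (fun a : 'I_(r1 + r2) => (1%:Z, evar (wvar a)))
    (filter (fun a : 'I_(r1 + r2) => ~~ (a < r1)%N) (enum 'I_(r1 + r2))).

(* virtual tangent space of the zero-locus description
   {[B1,B2]=0, B1 I1 = 0, B2 I2 = 0} in the non-commutative Quot scheme:
   T^vir = V^*V (t1 + t2 - 1 - t1 t2) + W1^* V (1 - t1) + W2^* V (1 - t2). *)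
Definition Tvir (k : 'I_(r1 + r2) -> nat) : vchar N :=
  let V := Vchar k in
  vmul (vmul (vdual V) V)
       [:: (1%:Z, T1); (1%:Z, T2); (-1, eone N); (-1, emul T1 T2)]
  ++ vmul (vmul (vdual W1char) V) [:: (1%:Z, eone N); (-1, T1)]
  ++ vmul (vmul (vdual W2char) V) [:: (1%:Z, eone N); (-1, T2)].

Definition Kf := {fraction {mpoly rat[N]}}.
Definition Xf (i : 'I_N) : Kf := ('X_i)%:F.
Definition monf (e : expo N) : Kf := \prod_(i < N) Xf i ^ (e i).

(* 1 / Lambda_{-1}(T^vir)^vee  = prod_mu (1 - mu^{-1})^{-mult mu} *)
Definition contrib (A : vchar N) : Kf :=
  \prod_(e <- undup (map snd A) | vmult A e != 0)
     (1 - (monf e)^-1) ^ (- vmult A e).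

(* Z_{r,n} = chi(M_{r,n}, O^vir) by T-equivariant localization:
   sum over fixed points k (compositions of n into r1 + r2 parts). *)
Definition Zrn (n : nat) : Kf :=
  \sum_(k : {ffun 'I_(r1 + r2) -> 'I_n.+1} | (\sum_a (k a : nat) == n)%N)
     contrib (Tvir (fun a => k a)).

Definition subst_t1 (p : {mpoly rat[N]}) : Kf :=
  mmap (fun c : rat => (c%:MP)%:F)
       (fun i : 'I_N => if i == tvar r1 r2 t1i then (Xf (tvar r1 r2 t2i))^-1
                        else Xf i) p.

End Quot.

From HB Require Import structures.
From mathcomp Require Import all_boot all_order all_algebra.
From mathcomp Require Import fraction mpoly.
From mathcomp Require Import zify ring.
Set Implicit Arguments. Unset Strict Implicit. Unset Printing Implicit Defensive.
Import Order.TTheory GRing.Theory Num.Theory.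
Local Open Scope ring_scope.

(* Each fixed-point contribution is a product of factors (1 - mu^-1)^(-m(mu))
   over the weights mu of T^vir.  Under t1 := t2^-1 the only weights that
   become 1 are the (t1 t2)^c, and their multiplicity in T^vir is 0 except for
   t1 t2, whose multiplicity is minus the number of nonzero parts of the
   composition k indexing the fixed point.  So no factor has a pole on the
   slice, and when n > 0 the factor of t1 t2 is a positive power of a function
   vanishing there. *)

Section VirtualCharacterSums.
Variable N : nat.

Definition vsum (A : vchar N) (g : expo N -> int) : int := \sum_(p <- A) p.1 * g p.2.

Lemma vmultE A e : vmult A e = vsum A (fun x => (x == e)%:R).
Proof.
rewrite /vmult /vsum big_mkcond; apply: eq_bigr => p _.
by case: eqP; rewrite ?mulr1 ?mulr0.
Qed.

Lemma vsum_cat A B g : vsum (A ++ B) g = vsum A g + vsum B g.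
Proof. exact: big_cat. Qed.

Lemma vsum_vmul A B g :
  vsum (vmul A B) g = vsum A (fun x => vsum B (fun y => g (emul x y))).
Proof.
rewrite /vsum /vmul big_allpairs_dep /=; apply: eq_bigr => p _.
by rewrite mulr_sumr; apply: eq_bigr => q _; rewrite mulrA.
Qed.

Lemma vsum_vdual A g : vsum (vdual A) g = vsum A (fun x => g (einv x)).
Proof. exact: big_map. Qed.

Lemma emulE (x y : expo N) i : emul x y i = x i + y i.
Proof. by rewrite ffunE. Qed.

Lemma einvE (x : expo N) i : einv x i = - x i.
Proof. by rewrite ffunE. Qed.

Lemma epowE (x : expo N) z i : epow x z i = x i * z.
Proof. by rewrite ffunE. Qed.

Lemma evarE (i j : 'I_N) : evar i j = ((j == i) : nat)%:Z.
Proof. by rewrite ffunE. Qed.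

Lemma eoneE i : eone N i = 0.
Proof. by rewrite ffunE. Qed.

End VirtualCharacterSums.

Section Coordinates.
Variables r1 r2 : nat.
Local Notation N := (nv r1 r2).
Local Notation tv := (tvar r1 r2).
Local Notation wv := (@wvar r1 r2).
Local Notation T1 := (evar (tv t1i)).
Local Notation T2 := (evar (tv t2i)).

Lemma eq_tvar_wvar t a : (tv t == wv a) = false.
Proof. exact: eq_lrshift. Qed.

Lemma eq_wvar_tvar a t : (wv a == tv t) = false.
Proof. exact: eq_rlshift. Qed.

Lemma eq_tvar s t : (tv s == tv t) = (s == t).
Proof. exact: eq_shift.1.1.1. Qed.

Lemma eq_wvar a b : (wv a == wv b) = (a == b).
Proof. exact: eq_shift.1.1.2. Qed.

Lemma ord2P (t : 'I_2) : t = t1i \/ t = t2i.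
Proof. by case: t => [[|[|m]] ltm2] //; [left|right]; apply: val_inj. Qed.

Lemma expoP (e f : expo N) :
  (forall t, e (tv t) = f (tv t)) -> (forall a, e (wv a) = f (wv a)) -> e = f.
Proof.
move=> Ht Hw; apply/ffunP => i.
have -> : i = unsplit (split (i : 'I_(2 + (r1 + r2)))) by rewrite splitK.
by case: (split _) => [t|a] /=; [exact: Ht|exact: Hw].
Qed.

(* The monomials (t1 t2)^c are exactly those that become 1 under t1 := t2^-1. *)
Definition tdiag (c : int) : expo N := epow (emul T1 T2) c.

Definition diagonal (e : expo N) := e == tdiag (e (tv t1i)).

Lemma tdiag_t c t : tdiag c (tv t) = c.
Proof. by rewrite epowE emulE !evarE !eq_tvar; case: (ord2P t) => ->; rewrite mul1r. Qed.

Lemma tdiag_w c a : tdiag c (wv a) = 0.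
Proof. by rewrite epowE emulE !evarE !eq_wvar_tvar mul0r. Qed.

Lemma eq_tdiag (x : expo N) c : (x == tdiag c) =
  [&& [forall a, x (wv a) == 0], x (tv t1i) == c & x (tv t2i) == c].
Proof.
apply/eqP/and3P => [->|[/forallP xw /eqP x1 /eqP x2]].
  by rewrite !tdiag_t !eqxx; split=> //; apply/forallP => a; rewrite tdiag_w.
apply: expoP => [t|a]; last by rewrite tdiag_w; apply/eqP.
by rewrite tdiag_t; case: (ord2P t) => ->.
Qed.

Lemma neq_tdiag_w (x : expo N) c a : x (wv a) != 0 -> (x == tdiag c) = false.
Proof. by move=> xa; apply: contraNF xa => /eqP ->; rewrite tdiag_w. Qed.

End Coordinates.

Arguments tdiag {r1 r2} c.

Lemma sum_iota_eq K x : \sum_(j <- iota 0 K) ((j == x)%:R : int) = (x < K)%:R.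
Proof.
elim: K => [|K IH]; first by rewrite big_nil.
rewrite -addn1 iotaD big_cat big_seq1 IH /= add0n -natrD; congr _%:R.
by case: eqP => [->|]; lia.
Qed.

Lemma sum_iota_ge K m : \sum_(j <- iota 0 K) ((m <= j)%N%:R : int) = (K - m)%:R.
Proof.
elim: K => [|K IH]; first by rewrite big_nil.
rewrite -addn1 iotaD big_cat big_seq1 IH /= add0n -natrD; congr _%:R; lia.
Qed.

Lemma sum_pairs_diff K m :
  \sum_(j <- iota 0 K) \sum_(j' <- iota 0 K) ((j%:Z - j'%:Z == m%:Z)%:R : int)
  = (K - m)%:R.
Proof.
rewrite -sum_iota_ge; apply: eq_big_seq => j; rewrite mem_iota add0n => /= ltjK.
have [lemj|ltjm] := leqP m j; last by rewrite big1 // => j' _; case: eqP => //; lia.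
rewrite (eq_bigr (fun j' => ((j' == j - m)%N%:R : int))) ?sum_iota_eq.
  by congr _%:R; lia.
by move=> j' _; congr _%:R; apply/eqP/eqP; lia.
Qed.

Lemma sum_pairs_diffN K m :
  \sum_(j <- iota 0 K) \sum_(j' <- iota 0 K) ((j%:Z - j'%:Z == - m%:Z)%:R : int)
  = (K - m)%:R.
Proof.
rewrite exchange_big -sum_pairs_diff; apply: eq_bigr => j' _; apply: eq_bigr => j _.
by congr _%:R; apply/eqP/eqP; lia.
Qed.

Lemma sum_enum_only (I : finType) (F : I -> int) a :
  (forall b, b != a -> F b = 0) -> \sum_(b <- enum I) F b = F a.
Proof.
by move=> F0; rewrite big_enum /= (bigD1 a) //= big1 ?addr0 // => b /andP[_]; exact: F0.
Qed.

Lemma sum_support_gt0 m (k : 'I_m -> nat) :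
  (0 < \sum_a k a)%N -> 0 < \sum_(a <- enum 'I_m) (0 < k a)%N%:R :> int.
Proof.
move=> sum_gt0; have [a ka] : exists a, (0 < k a)%N.
  apply/existsP; apply: contraTT sum_gt0 => /existsPn k0.
  by rewrite -eqn0Ngt sum_nat_eq0; apply/forallP => a; move: (k0 a); rewrite lt0n negbK.
rewrite (bigD1_seq a) ?mem_enum ?enum_uniq //= ka.
by apply: (lt_le_trans (ltr01 : 0 < 1 :> int)); rewrite lerDl sumr_ge0.
Qed.

Section TangentWeights.
Variables r1 r2 : nat.
Local Notation N := (nv r1 r2).
Local Notation tv := (tvar r1 r2).
Local Notation wv := (@wvar r1 r2).
Local Notation T1 := (evar (tv t1i)).
Local Notation T2 := (evar (tv t2i)).
Local Notation tdiag_ind c := (fun x : expo N => (x == tdiag c)%:R : int).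
Local Notation Lend := [:: (1%:Z, T1); (1%:Z, T2); (-1, eone N); (-1, emul T1 T2)].
Local Notation Lfram s := [:: (1%:Z, eone N); (-1, evar (tv s))].

(* [V_a] spreads along the coordinate of [A^1_i], which is [t2] for [a < r1]. *)
Definition vdir (a : 'I_(r1 + r2)) : 'I_2 := if (a < r1)%N then t2i else t1i.
Definition vshift a (d : int) : expo N := epow (evar (tv (vdir a))) d.
Definition vmono a (d : int) : expo N := emul (evar (wv a)) (vshift a d).

Lemma vshift_t a d t : vshift a d (tv t) = ((t == vdir a) : nat)%:Z * d.
Proof. by rewrite epowE evarE eq_tvar. Qed.

Lemma vshift_w a d b : vshift a d (wv b) = 0.
Proof. by rewrite epowE evarE eq_wvar_tvar mul0r. Qed.

Lemma vmono_w a d b : vmono a d (wv b) = ((b == a) : nat)%:Z.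
Proof. by rewrite emulE vshift_w evarE eq_wvar addr0. Qed.

Lemma vmono_quot a x y : emul (einv (vmono a x)) (vmono a y) = vshift a (y - x).
Proof.
apply: expoP => [t|b]; last by rewrite emulE einvE !vmono_w vshift_w addNr.
rewrite emulE einvE !emulE !vshift_t !evarE !eq_tvar_wvar; ring.
Qed.

Lemma wvar_quot a x : emul (einv (evar (wv a))) (vmono a x) = vshift a x.
Proof.
apply: expoP => [t|b]; rewrite emulE einvE ?vmono_w ?vshift_w evarE.
  by rewrite eq_tvar_wvar emulE evarE eq_tvar_wvar !add0r.
by rewrite eq_wvar addNr.
Qed.

Lemma vsum_Vchar k g : vsum (Vchar k) g =
  \sum_(a <- enum 'I_(r1 + r2)) \sum_(j <- iota 0 (k a)) g (vmono a (- j%:Z)).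
Proof.
rewrite /vsum /Vchar big_flatten big_map /=; apply: eq_bigr => a _.
rewrite big_map; apply: eq_bigr => j _; rewrite mul1r /vmono /vshift /vdir.
by case: ifP.
Qed.

Section TdiagTests.
Variables (l : expo N) (c : int).
Hypothesis l_w : forall b, l (wv b) = 0.

Lemma eq_tdiag_vpair a b x y :
  (emul (emul (einv (vmono a x)) (vmono b y)) l == tdiag c)
  = (b == a) && (emul (vshift a (y - x)) l == tdiag c).
Proof.
have [->|nba] := eqVneq b a; first by rewrite vmono_quot.
apply: (@neq_tdiag_w _ _ _ c b).
by rewrite emulE (emulE (einv _)) einvE !vmono_w l_w (negbTE nba) eqxx.
Qed.

Lemma eq_tdiag_wpair a b y :
  (emul (emul (einv (evar (wv b))) (vmono a y)) l == tdiag c)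
  = (a == b) && (emul (vshift a y) l == tdiag c).
Proof.
have [->|nab] := eqVneq a b; first by rewrite wvar_quot.
apply: (@neq_tdiag_w _ _ _ c a).
by rewrite emulE (emulE (einv _)) einvE vmono_w evarE eq_wvar l_w (negbTE nab) eqxx.
Qed.

Lemma eq_tdiag_vshift a d : (emul (vshift a d) l == tdiag c) =
  (((t1i == vdir a) : nat)%:Z * d + l (tv t1i) == c)
  && (((t2i == vdir a) : nat)%:Z * d + l (tv t2i) == c).
Proof.
rewrite eq_tdiag !emulE !vshift_t.
have -> // : [forall b, emul (vshift a d) l (wv b) == 0].
by apply/forallP => b; rewrite emulE vshift_w l_w.
Qed.

End TdiagTests.

Lemma Lend_w : [/\ forall b, T1 (wv b) = 0, forall b, T2 (wv b) = 0,
  forall b, eone N (wv b) = 0 & forall b, emul T1 T2 (wv b) = 0].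
Proof. by split=> b; rewrite ?emulE ?evarE ?eq_wvar_tvar ?eoneE. Qed.

Lemma vsum_Lend_vshift a d c :
  vsum Lend (tdiag_ind c \o emul (vshift a d))
  = (c == 1)%:R * ((d == 1)%:R - (d == 0)%:R)
    + (c == 0)%:R * ((d == -1)%:R - (d == 0)%:R).
Proof.
have [w1 w2 w0 w12] := Lend_w.
rewrite /vsum !big_cons big_nil /= !eq_tdiag_vshift //.
rewrite !emulE !evarE !eoneE !eq_tvar /vdir.
by case: ifP => _ /=; rewrite !(mul1r, mul0r, add0r, addr0);
  do ! case: eqP => //=; lia.
Qed.

Lemma vsum_Lfram_vshift a s (j : nat) c : s != vdir a ->
  vsum (Lfram s) (tdiag_ind c \o emul (vshift a (- j%:Z)))
  = (c == 0)%:R * (j == 0)%:R.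
Proof.
move=> s_other; have [_ _ w0 _] := Lend_w.
have ws b : evar (tv s) (wv b) = 0 by rewrite evarE eq_wvar_tvar.
rewrite /vsum !big_cons big_nil /= !eq_tdiag_vshift // !evarE !eoneE !eq_tvar.
move: s_other; rewrite /vdir; case: ifP => _; case: (ord2P s) => -> //= _;
  by rewrite !(mul1r, mul0r, add0r, addr0); do ! case: eqP => //=; lia.
Qed.

Section WeightFree.
Variables (L : vchar N) (c : int).
Hypothesis L_w : forall p b, p \in L -> p.2 (wv b) = 0.

Lemma vsum_vpair a b x y :
  vsum L (tdiag_ind c \o emul (emul (einv (vmono a x)) (vmono b y)))
  = (b == a)%:R * vsum L (tdiag_ind c \o emul (vshift a (y - x))).
Proof.
rewrite /vsum mulr_sumr; apply: eq_big_seq => p pL /=.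
rewrite eq_tdiag_vpair => [|b']; last exact: L_w.
by case: (b == a); rewrite /= ?mul1r ?mul0r ?mulr0.
Qed.

Lemma vsum_wpair a b y :
  vsum L (tdiag_ind c \o emul (emul (einv (evar (wv b))) (vmono a y)))
  = (a == b)%:R * vsum L (tdiag_ind c \o emul (vshift a y)).
Proof.
rewrite /vsum mulr_sumr; apply: eq_big_seq => p pL /=.
rewrite eq_tdiag_wpair => [|b']; last exact: L_w.
by case: (a == b); rewrite /= ?mul1r ?mul0r ?mulr0.
Qed.

End WeightFree.

Lemma Lend_wfree p b : p \in Lend -> p.2 (wv b) = 0.
Proof. by have [w1 w2 w0 w12] := Lend_w; rewrite !inE => /or4P[] /eqP ->. Qed.

Lemma vsum_end_part k c :
  vsum (vmul (vmul (vdual (Vchar k)) (Vchar k)) Lend) (tdiag_ind c)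
  = \sum_(a <- enum 'I_(r1 + r2))
      ((c == 1)%:R + (c == 0)%:R) * ((k a).-1%:R - (k a)%:R).
Proof.
rewrite !vsum_vmul vsum_vdual vsum_Vchar; apply: eq_bigr => a _.
have collapse (j : nat) :
  vsum (Vchar k) (fun y => vsum Lend
    (fun z => (emul (emul (einv (vmono a (- j%:Z))) y) z == tdiag c)%:R))
  = \sum_(j' <- iota 0 (k a))
      ((c == 1)%:R * ((j%:Z - j'%:Z == 1)%:R - (j%:Z - j'%:Z == 0)%:R)
       + (c == 0)%:R * ((j%:Z - j'%:Z == -1)%:R - (j%:Z - j'%:Z == 0)%:R)).
  rewrite vsum_Vchar (sum_enum_only (a := a)) => [|b nba].
    apply: eq_bigr => j' _; rewrite vsum_vpair; last exact: Lend_wfree.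
    by rewrite eqxx mul1r vsum_Lend_vshift opprK (addrC (- _)).
  apply: big1 => j' _; rewrite vsum_vpair ?(negbTE nba) ?mul0r //.
  exact: Lend_wfree.
rewrite (eq_bigr _ (fun j _ => collapse j)).
under eq_bigr => j _ do rewrite big_split /= -!mulr_sumr !sumrB.
rewrite big_split /= -!mulr_sumr !sumrB (sum_pairs_diff _ 1) (sum_pairs_diff _ 0).
by rewrite (sum_pairs_diffN _ 1) subn0 subn1; ring.
Qed.

Lemma vsum_framing_part (P : pred 'I_(r1 + r2)) s k c : (forall a, P a -> s != vdir a) ->
  vsum (vmul (vmul (vdual [seq (1%:Z, evar (wv a)) | a <- enum 'I_(r1 + r2) & P a])
                   (Vchar k)) (Lfram s)) (tdiag_ind c)
  = \sum_(a <- enum 'I_(r1 + r2) | P a) (c == 0)%:R * (0 < k a)%N%:R.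
Proof.
move=> s_other; have [_ _ w0 _] := Lend_w.
have L_w p b : p \in Lfram s -> p.2 (wv b) = 0.
  by rewrite !inE => /orP[] /eqP -> //=; rewrite evarE eq_wvar_tvar.
rewrite !vsum_vmul vsum_vdual {1}/vsum big_map big_filter; apply: eq_bigr => b Pb /=.
rewrite mul1r vsum_Vchar (sum_enum_only (a := b)) => [|a nab].
  rewrite -sum_iota_eq mulr_sumr; apply: eq_bigr => j _.
  by rewrite vsum_wpair // eqxx mul1r vsum_Lfram_vshift ?s_other.
by apply: big1 => j _; rewrite vsum_wpair // (negbTE nab) mul0r.
Qed.

Lemma vmult_Tvir_tdiag k c : vmult (Tvir k) (tdiag c)
  = - ((c == 1)%:R * \sum_(a <- enum 'I_(r1 + r2)) (0 < k a)%N%:R).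
Proof.
rewrite vmultE /Tvir !vsum_cat vsum_end_part.
rewrite (@vsum_framing_part (fun a => (a < r1)%N) t1i) => [|a]; last by rewrite /vdir => ->.
rewrite (@vsum_framing_part (fun a => ~~ (a < r1)%N) t2i) => [|a]; last first.
  by rewrite /vdir => /negbTE ->.
rewrite [X in _ + X](_ : _ =
  \sum_(a <- enum 'I_(r1 + r2)) (c == 0)%:R * (0 < k a)%N%:R).
  rewrite -big_split mulr_sumr -sumrN; apply: eq_bigr => a _ /=.
  have -> : ((k a).-1%:R - (k a)%:R : int) = - (0 < k a)%N%:R.
    by case: (k a) => //= m; lia.
  ring.
rewrite big_mkcond [X in _ + X]big_mkcond -big_split; apply: eq_bigr => a _.
by case: (a < r1)%N => /=; rewrite ?addr0 ?add0r.
Qed.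

End TangentWeights.

Section RestrictedFractions.
Variables (R : idomainType) (L : fieldType) (phi : {rmorphism R -> L}).

Definition regular (x : {fraction R}) :=
  exists p q : R, phi q != 0 /\ x = p%:F / q%:F.

Definition vanishing (x : {fraction R}) :=
  exists p q : R, [/\ phi q != 0, x = p%:F / q%:F & phi p = 0].

Lemma tofrac_neq0 (q : R) : phi q != 0 -> q%:F != 0.
Proof. by apply: contraNneq => /eqP; rewrite tofrac_eq0 => /eqP ->; rewrite rmorph0. Qed.

Lemma regular1 : regular 1.
Proof. by exists 1, 1; rewrite rmorph1 oner_neq0 divr1 tofrac1. Qed.

Lemma regularM x y : regular x -> regular y -> regular (x * y).
Proof.
move=> [p1 [q1 [q1P ->]]] [p2 [q2 [q2P ->]]]; exists (p1 * p2), (q1 * q2).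
by split; [rewrite rmorphM mulf_neq0|rewrite mulf_div !tofracM].
Qed.

Lemma vanishing0 : vanishing 0.
Proof. by exists 0, 1; rewrite !rmorph0 !rmorph1 oner_neq0 mul0r. Qed.

Lemma vanishingMr x y : vanishing x -> regular y -> vanishing (x * y).
Proof.
move=> [p1 [q1 [q1P -> p1P]]] [p2 [q2 [q2P ->]]]; exists (p1 * p2), (q1 * q2).
by split; [rewrite rmorphM mulf_neq0|rewrite mulf_div !tofracM|rewrite rmorphM p1P mul0r].
Qed.

Lemma vanishingD x y : vanishing x -> vanishing y -> vanishing (x + y).
Proof.
move=> [p1 [q1 [q1P -> p1P]]] [p2 [q2 [q2P -> p2P]]].
exists (p1 * q2 + p2 * q1), (q1 * q2).
split; first by rewrite rmorphM mulf_neq0.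
  by rewrite addf_div ?tofrac_neq0 // tofracD !tofracM.
by rewrite rmorphD !rmorphM p1P p2P !mul0r addr0.
Qed.

Lemma regular_frac_expz (p q : R) (z : int) :
  phi q != 0 -> 0 <= z \/ phi p != 0 -> regular ((p%:F / q%:F) ^ z).
Proof.
move=> qP; case: z => n zP.
  exists (p ^+ n), (q ^+ n).
  by split; [rewrite rmorphXn expf_neq0|rewrite -exprnP expr_div_n !tofracXn].
have pP : phi p != 0 by case: zP.
exists (q ^+ n.+1), (p ^+ n.+1); split; first by rewrite rmorphXn expf_neq0.
by rewrite NegzE -exprnN expr_div_n invf_div !tofracXn.
Qed.

Lemma vanishing_frac_expS (p q : R) n :
  phi q != 0 -> phi p = 0 -> vanishing ((p%:F / q%:F) ^+ n.+1).
Proof.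
move=> qP pP; exists (p ^+ n.+1), (q ^+ n.+1).
split; [by rewrite rmorphXn expf_neq0|by rewrite expr_div_n !tofracXn|].
by rewrite rmorphXn pP expr0n.
Qed.

End RestrictedFractions.

HB.instance Definition _ (r1 r2 : nat) := GRing.Field.on (Kf r1 r2).

Section ExponentParts.
Variables (n : nat) (L : fieldType).

Definition mpos (e : expo n) : 'X_{1..n} :=
  [multinom (if e i is Posz k then k else 0%N) | i < n].
Definition mneg (e : expo n) : 'X_{1..n} :=
  [multinom (if e i is Negz k then k.+1 else 0%N) | i < n].

Lemma mmap1_mpos_mneg (h : 'I_n -> L) (e : expo n) :
  mmap1 h (mpos e) / mmap1 h (mneg e) = \prod_(i < n) h i ^ e i.
Proof.
rewrite /mmap1 -prodfV -big_split /=; apply: eq_bigr => i _; rewrite !mnmE.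
by case: (e i) => k /=; rewrite ?expr0 ?invr1 ?mulr1 ?mul1r.
Qed.

Lemma mmap1_neq0 (h : 'I_n -> L) m : (forall i, h i != 0) -> mmap1 h m != 0.
Proof. by move=> h_neq0; apply/prodf_neq0 => i _; apply: expf_neq0. Qed.

End ExponentParts.

Section Monomials.
Variables r1 r2 : nat.
Local Notation N := (nv r1 r2).
Local Notation K := (Kf r1 r2).
Local Notation P := {mpoly rat[N]}.

Lemma Xf_neq0 (i : 'I_N) : Xf i != 0.
Proof.
rewrite /Xf tofrac_eq0; apply/eqP => /(congr1 (mcoeff U_(i)%MM)).
by rewrite mcoeffXU eqxx mcoeff0 => /eqP; rewrite oner_eq0.
Qed.

Lemma tofracXm (m : 'X_{1..N}) : ('X_[m] : P)%:F = mmap1 (@Xf r1 r2) m :> K.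
Proof.
by rewrite mpolyXE_id /mmap1 rmorph_prod; apply: eq_bigr => i _; rewrite rmorphXn.
Qed.

Lemma monfE e : monf e = ('X_[mpos e] : P)%:F / ('X_[mneg e] : P)%:F.
Proof. by rewrite !tofracXm mmap1_mpos_mneg. Qed.

Lemma monf_eq1 (f : expo N) : monf f = 1 -> f = eone N.
Proof.
rewrite monfE => f1.
have Xneg_neq0 : ('X_[mneg f] : P)%:F != 0 :> K.
  by rewrite tofracXm mmap1_neq0 // => i; exact: Xf_neq0.
have /eqP : ('X_[mpos f] : P)%:F = ('X_[mneg f] : P)%:F :> K.
  by rewrite -[RHS]mul1r -f1 mulfVK.
rewrite tofrac_eq => /eqP/(congr1 (mcoeff (mpos f))).
rewrite !mcoeffX eqxx; case: eqP => [mposE _|_ /eqP]; last by rewrite oner_eq0.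
apply/ffunP => i; have := congr1 (fun m : 'X_{1..N} => m i) mposE.
by rewrite /= !mnmE eoneE; case: (f i) => n // <-.
Qed.

End Monomials.

Section Substitution.
Variables r1 r2 : nat.
Local Notation N := (nv r1 r2).
Local Notation tv := (tvar r1 r2).
Local Notation K := (Kf r1 r2).
Local Notation P := {mpoly rat[N]}.

Definition subst_coef : {rmorphism rat -> K} := (@tofrac _ \o @mpolyC N rat)%FUN.
Definition subst_var (i : 'I_N) : K :=
  if i == tv t1i then (Xf (tv t2i))^-1 else Xf i.
(* [subst_t1] unfolds to this morphism. *)
Definition subst_morph : {rmorphism P -> K} := mmap subst_coef subst_var.

Lemma subst_morphXm (m : 'X_{1..N}) : subst_morph 'X_[m] = mmap1 subst_var m.
Proof. exact: mmapX. Qed.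

Lemma subst_var_neq0 i : subst_var i != 0.
Proof. by rewrite /subst_var; case: ifP; rewrite ?invr_eq0 Xf_neq0. Qed.

Definition subst_expo (e : expo N) : expo N := [ffun i =>
  if i == tv t1i then 0 else if i == tv t2i then e (tv t2i) - e (tv t1i) else e i].

Lemma prod_subst_var (e : expo N) :
  \prod_(i < N) subst_var i ^ e i = monf (subst_expo e).
Proof.
have t21 : (tv t2i == tv t1i) = false by rewrite eq_tvar.
rewrite /monf (bigD1 (tv t1i)) // [RHS](bigD1 (tv t1i)) //=.
rewrite (bigD1 (tv t2i)) ?t21 // [in RHS](bigD1 (tv t2i)) ?t21 //=.
rewrite /subst_var eqxx t21 !ffunE eqxx t21 eqxx expr0z mul1r exprz_inv.
rewrite addrC (expfzDr _ _ (Xf_neq0 _)) -mulrA; congr (_ * (_ * _)).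
by apply: eq_bigr => i /andP[/negbTE i1 /negbTE i2]; rewrite ffunE i1 i2.
Qed.

Lemma subst_expo_eq0 (e : expo N) : (subst_expo e == eone N) = diagonal e.
Proof.
have t21 : (tv t2i == tv t1i) = false by rewrite eq_tvar.
rewrite /diagonal eq_tdiag eqxx /=; apply/eqP/andP => [e0|[/forallP ew /eqP e12]].
  have ecoord i : subst_expo e i = 0 by rewrite e0 eoneE.
  split.
    by apply/forallP => a; move: (ecoord (wvar a)); rewrite ffunE !eq_wvar_tvar => ->.
  by move: (ecoord (tv t2i)); rewrite ffunE t21 eqxx => /eqP; rewrite subr_eq0 eq_sym.
apply: expoP => [t|a]; rewrite !ffunE; last by rewrite !eq_wvar_tvar; apply/eqP.
by case: (ord2P t) => ->; rewrite ?eqxx // t21 e12 subrr.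
Qed.

Lemma monf_eone : monf (eone N) = 1.
Proof. by rewrite /monf big1 // => i _; rewrite eoneE expr0z. Qed.

Lemma subst_morph_Xm_eq (e : expo N) :
  (subst_morph 'X_[mpos e] == subst_morph 'X_[mneg e]) = diagonal e.
Proof.
have neg_neq0 : mmap1 subst_var (mneg e) != 0.
  by apply: mmap1_neq0 => i; exact: subst_var_neq0.
have quot :
    mmap1 subst_var (mpos e) / mmap1 subst_var (mneg e) = monf (subst_expo e).
  by rewrite mmap1_mpos_mneg prod_subst_var.
rewrite !subst_morphXm -subst_expo_eq0; apply/eqP/eqP => [pos_neg|e0].
  by apply: monf_eq1; rewrite -quot pos_neg divff.
by rewrite -[LHS](mulfVK neg_neq0) quot e0 monf_eone mul1r.
Qed.

Lemma subst_morph_Xm_neq0 (m : 'X_{1..N}) : subst_morph 'X_[m] != 0.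
Proof. by rewrite subst_morphXm; apply: mmap1_neq0 => i; exact: subst_var_neq0. Qed.

Lemma weight_factorE (e : expo N) :
  1 - (monf e)^-1 = ('X_[mpos e] - 'X_[mneg e] : P)%:F / ('X_[mpos e] : P)%:F.
Proof.
have pos_neq0 : ('X_[mpos e] : P)%:F != 0 :> K.
  by rewrite tofracXm mmap1_neq0 // => i; exact: Xf_neq0.
by rewrite monfE invf_div tofracB mulrBl divff.
Qed.

Lemma regular_weight_factor (e : expo N) (z : int) :
  (diagonal e -> 0 <= z) -> regular subst_morph ((1 - (monf e)^-1) ^ z).
Proof.
move=> ez; rewrite weight_factorE; apply: regular_frac_expz.
  exact: subst_morph_Xm_neq0.
have [/ez|nde] := boolP (diagonal e); [by left|right].
by rewrite rmorphB subr_eq0 subst_morph_Xm_eq.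
Qed.

Lemma vanishing_weight_factor (e : expo N) n :
  diagonal e -> vanishing subst_morph ((1 - (monf e)^-1) ^+ n.+1).
Proof.
move=> de; rewrite weight_factorE; apply: vanishing_frac_expS.
  exact: subst_morph_Xm_neq0.
by apply/eqP; rewrite rmorphB subr_eq0 subst_morph_Xm_eq.
Qed.

Lemma vanishing_contrib (A : vchar N) (e0 : expo N) :
  (forall e, diagonal e -> vmult A e <= 0) -> diagonal e0 -> vmult A e0 < 0 ->
  vanishing subst_morph (contrib A).
Proof.
move=> A_le0 de0 Ae0_lt0.
have e0A : e0 \in undup (map snd A).
  rewrite mem_undup; apply: contraLR Ae0_lt0 => /mapP e0A.
  rewrite /vmult big1_seq ?ltxx // => p /andP[/eqP pe0 pA].
  by case: e0A; exists p.
rewrite /contrib big_mkcond /= (bigD1_seq e0) ?undup_uniq //= ifT ?ltr0_neq0 //.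
apply: vanishingMr.
  have : 0 < - vmult A e0 by rewrite oppr_gt0.
  by case: (- vmult A e0) => [[|n]|n] //= _; exact: vanishing_weight_factor.
apply: (big_ind (regular subst_morph)); [exact: regular1|exact: regularM|] => e _.
case: ifP => _; last exact: regular1.
by apply: regular_weight_factor => de; rewrite oppr_ge0 A_le0.
Qed.

End Substitution.

Theorem mainTheorem12 (r1 r2 n : nat) (hn : (0 < n)%N) :
  exists Nm Dn : {mpoly rat[nv r1 r2]},
    [/\ subst_t1 Dn != 0,
        Zrn r1 r2 n = Nm%:F / Dn%:F
      & subst_t1 Nm = 0].
Proof.
suff [Nm [Dn [Dn_neq0 ZE Nm0]]] : vanishing (subst_morph r1 r2) (Zrn r1 r2 n).
  by exists Nm, Dn.
apply: (big_ind (vanishing _)); [exact: vanishing0|exact: vanishingD|] => k /eqP sum_k.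
apply: (@vanishing_contrib _ _ _ (tdiag 1)).
- by move=> e /eqP ->; rewrite vmult_Tvir_tdiag oppr_le0 mulr_ge0 ?sumr_ge0.
- by rewrite /diagonal tdiag_t.
rewrite vmult_Tvir_tdiag eqxx mul1r oppr_lt0.
by apply: (@sum_support_gt0 _ (fun a => k a)); rewrite sum_k.
Qed.
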